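(* Let $x'=f(x)$, $x\in\mathbb R^d_{>0}$, be the deterministic system of a reaction network with species $X_1,\dots,X_d$, and let $\theta,\mu>0$ be such that there exists a positive steady state $x^*$ with $x^*_1=\mu/\theta$. Suppose: (1) the system admits $k$ linearly independent conservation relations $u^i\cdot x(t)=M_i$ ($i=1,\dots,k$) with $u^i\in\mathbb R^d_{>0}$, written after reordering of coordinates as $[U\,|\,I]x=M$ with $U$ a $k\times\bar d$ matrix, $\bar d=d-k$, $I$ the $k\times k$ identity, and with $u^1_1\ne 0$; (2) all eigenvalues of $J(x^* )$ have strictly negative real parts; (3) $H_2(0)>0$ if $\bar d$ is odd and $H_2(0)<0$ if $\bar d$ is even. Then, for sufficiently small $\theta$ and $\mu$ and sufficiently large initial value $z(0)$ of the control species, all eigenvalues of $\bar J(x^*,z^* )$ have strictly negative real parts; that is, the positive steady state $(x^*,z^* )$ of the union system of the given system and the basic ACR system $X_1+Z\xrightarrow{\theta}2Z$, $Z\xrightarrow{\mu}X_1$ is linearly stable.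
   Context: Reduced system of the original network: using the conservation relations, $x_{\bar d+j}=M_j-\sum_{i=1}^{\bar d}u^j_ix_i$ for $j=1,\dots,k$, and $g_i(x_1,\dots,x_{\bar d})=f_i(x_1,\dots,x_{\bar d},M_1-\sum_i u^1_ix_i,\dots,M_k-\sum_i u^k_ix_i)$ for $i=1,\dots,\bar d$; $J(x^* )$ denotes the Jacobian of $(g_1,\dots,g_{\bar d})$ at $(x^*_1,\dots,x^*_{\bar d})$. Union (controlled) system: $x_1'=f_1(x)-z(\theta x_1-\mu)$, $z'=z(\theta x_1-\mu)$, $x_i'=f_i(x)$ for $i\ge 2$ (mass-action kinetics for the controller). Its conservation relations are $u^i\cdot x+u^i_1z=\bar M_i$, so it reduces to variables $(x_1,\dots,x_{\bar d},z)$ via $x_{\bar d+j}=\bar M_j-\sum_{i=1}^{\bar d}u^j_ix_i-u^j_1z$, giving functions $h_1,\dots,h_{\bar d}$ (obtained from $f_1-z(\theta x_1-\mu),f_2,\dots,f_{\bar d}$ by this substitution) and $h_{\bar d+1}=z(\theta x_1-\mu)$. $(x^*,z^* )$ is a positive steady state of the union system with this $x^*$ ($x^*_1=\mu/\theta$) and $z^*>0$ determined by the conservation relations and the initial data. $\bar J(x^*,z^* )$ is the Jacobian of $(h_1,\dots,h_{\bar d+1})$ in the variables $(x_1,\dots,x_{\bar d},z)$ at $(x^*,z^* )$. $H_2(\lambda)$ is the determinant of the $\bar d\times\bar d$ matrix obtained from $\lambda I-\bar J(x^*,z^* )$ by deleting its last row and its first column; explicitly its rows $i=1,\dots,\bar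 d$ are $(\lambda\delta_{i2}-\partial_2g_i(x^* ),\dots,\lambda\delta_{i\bar d}-\partial_{\bar d}g_i(x^* ),-\partial_zh_i(x^*,z^* ))$. *)

From HB Require Import structures.
From mathcomp Require Import all_boot all_order all_algebra.
From mathcomp Require Import all_classical all_reals all_analysis.
From mathcomp Require Import complex.
Set Implicit Arguments. Unset Strict Implicit. Unset Printing Implicit Defensive.
Import Order.TTheory GRing.Theory Num.Theory.
Import numFieldNormedType.Exports.
Local Open Scope ring_scope.

(* Indexing conventions.
   dbar = n.+1 (reduced species X_1..X_dbar), k = m.+1 conservation relations,
   d = n.+1 + m.+1 species.  A state is a row vector x : 'rV[R]_(n.+1 + m.+1);
   species X_i (i <= dbar) is x 0 (lshift _ i), species X_{dbar+j} is
   x 0 (rshift _ j).  U : 'M_(m.+1, n.+1), U j i = u^j_i, so the conservation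
   relations read  [U | I] x = M, i.e. lsubmx x *m U^T + rsubmx x = M.
   Species X_1 is index ord0 of 'I_(n.+1); u^1_1 = U 0 0. *)

Definition dpart (R : realType) (p : nat) (F : 'rV[R]_p -> R)
    (a : 'rV[R]_p) (l : 'I_p) : R :=
  derive F a (delta_mx 0 l).

Definition consM (R : realType) (n m : nat) (U : 'M[R]_(m.+1, n.+1))
    (x : 'rV[R]_(n.+1 + m.+1)) : 'rV[R]_(m.+1) :=
  lsubmx x *m U^T + rsubmx x.

Definition liftx (R : realType) (n m : nat) (U : 'M[R]_(m.+1, n.+1))
    (M : 'rV[R]_(m.+1)) (y : 'rV[R]_(n.+1)) : 'rV[R]_(n.+1 + m.+1) :=
  row_mx y (M - y *m U^T).

Definition gfun (R : realType) (n m : nat)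
    (f : 'rV[R]_(n.+1 + m.+1) -> 'rV[R]_(n.+1 + m.+1))
    (U : 'M[R]_(m.+1, n.+1)) (M : 'rV[R]_(m.+1)) (i : 'I_(n.+1))
    (y : 'rV[R]_(n.+1)) : R :=
  f (liftx U M y) 0 (lshift m.+1 i).

Definition Jred (R : realType) (n m : nat)
    (f : 'rV[R]_(n.+1 + m.+1) -> 'rV[R]_(n.+1 + m.+1))
    (U : 'M[R]_(m.+1, n.+1)) (xs : 'rV[R]_(n.+1 + m.+1)) : 'M[R]_(n.+1) :=
  \matrix_(i, l) dpart (gfun f U (consM U xs) i) (lsubmx xs) l.

(* Union system, reduced variables w = (x_1, ..., x_dbar, z) : 'rV_(n.+2). *)
Definition yof (R : realType) (n : nat) (w : 'rV[R]_(n.+2)) : 'rV[R]_(n.+1) :=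
  \row_(i < n.+1) w 0 (widen_ord (leqnSn n.+1) i).
Definition zof (R : realType) (n : nat) (w : 'rV[R]_(n.+2)) : R := w 0 ord_max.

Definition u1 (R : realType) (n m : nat) (U : 'M[R]_(m.+1, n.+1)) : 'rV[R]_(m.+1) :=
  \row_j U j 0.

Definition liftxz (R : realType) (n m : nat) (U : 'M[R]_(m.+1, n.+1))
    (Mb : 'rV[R]_(m.+1)) (w : 'rV[R]_(n.+2)) : 'rV[R]_(n.+1 + m.+1) :=
  row_mx (yof w) (Mb - yof w *m U^T - zof w *: u1 U).

Definition hfun (R : realType) (n m : nat)
    (f : 'rV[R]_(n.+1 + m.+1) -> 'rV[R]_(n.+1 + m.+1))
    (U : 'M[R]_(m.+1, n.+1)) (theta mu : R) (Mb : 'rV[R]_(m.+1))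
    (i : 'I_(n.+2)) (w : 'rV[R]_(n.+2)) : R :=
  match unlift ord_max i with
  | Some i' => f (liftxz U Mb w) 0 (lshift m.+1 i')
               - (i' == ord0)%:R * (zof w * (theta * yof w 0 ord0 - mu))
  | None => zof w * (theta * yof w 0 ord0 - mu)
  end.

Definition consMbar (R : realType) (n m : nat) (U : 'M[R]_(m.+1, n.+1))
    (xs : 'rV[R]_(n.+1 + m.+1)) (zs : R) : 'rV[R]_(m.+1) :=
  consM U xs + zs *: u1 U.

Definition wstar (R : realType) (n m : nat) (xs : 'rV[R]_(n.+1 + m.+1)) (zs : R)
    : 'rV[R]_(n.+2) :=
  \row_(i < n.+2) match unlift ord_max i with
                  | Some i' => xs 0 (lshift m.+1 i')
                  | None => zs end.

Definition Jbar (R : realType) (n m : nat)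
    (f : 'rV[R]_(n.+1 + m.+1) -> 'rV[R]_(n.+1 + m.+1))
    (U : 'M[R]_(m.+1, n.+1)) (theta mu : R)
    (xs : 'rV[R]_(n.+1 + m.+1)) (zs : R) : 'M[R]_(n.+2) :=
  \matrix_(i, l) dpart (hfun f U theta mu (consMbar U xs zs) i) (wstar xs zs) l.

Definition H2at0 (R : realType) (n m : nat)
    (f : 'rV[R]_(n.+1 + m.+1) -> 'rV[R]_(n.+1 + m.+1))
    (U : 'M[R]_(m.+1, n.+1)) (theta mu : R)
    (xs : 'rV[R]_(n.+1 + m.+1)) (zs : R) : R :=
  \det (row' ord_max (col' ord0 ((0 : R)%:M - Jbar f U theta mu xs zs))).

Definition all_eig_neg_re (R : realType) (p : nat) (A : 'M[R]_p) : Prop :=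
  forall lam : R[i], eigenvalue (map_mx (real_complex R) A) lam -> Re lam < 0.

From HB Require Import structures.
From mathcomp Require Import all_boot all_order all_algebra.
From mathcomp Require Import all_classical all_reals all_analysis.
From mathcomp Require Import complex polyrcf.
From mathcomp.algebra_tactics Require Import ring lra.
Set Implicit Arguments. Unset Strict Implicit. Unset Printing Implicit Defensive.
Import Order.TTheory GRing.Theory Num.Theory.
Import numFieldNormedType.Exports.
Local Open Scope classical_set_scope.
Local Open Scope complex_scope.
Local Open Scope ring_scope.

(** In the coordinates (x_1, ..., x_dbar, z) the Jacobian of the controlled
  system at (xs, zs) is the bordered matrix [[J - e E_11, c], [e e_1^T, 0]]
  with e = theta zs, where J = J(xs) and c is the z-column of the network
  part; the controller row has no other entries because theta xs_1 = mu.
  The minor H_2(0) equals (-1)^dbar r with r = (adj(-J) c)_11, independently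
  of e, so condition (3) says exactly r < 0.
  Let lam be an eigenvalue with Re lam >= 0. As J is Hurwitz, P = det(X - J)
  does not vanish there, and the eigenvector equations give
  lam P(lam) = e S(lam) for a polynomial S with S(0) = r. Since |P| is
  bounded below on the closed right half-plane and lam stays bounded for
  e <= 1, we get |lam| = O(e), hence lam P(0) - e r = O(e^2). But the real
  part of lam P(0) - e r is at least -e r > 0, which is impossible for small
  e, i.e. for theta < e0 / zs. *)

(** * The bordered Jacobian *)

Section ControlledMatrix.
Variables (R : comNzRingType) (N : nat).
Implicit Types (A : 'M[R]_N.+1) (c : 'cV[R]_N.+1) (e : R).

(* [[A - e E_11, c], [e e_1^T, 0]], the border being the last row and column. *)
Definition controlled_mx A c e : 'M[R]_N.+2 :=
  \matrix_(i, l) match unlift ord_max i, unlift ord_max l with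
  | Some i', Some l' => A i' l' - ((i' == ord0) && (l' == ord0))%:R * e
  | Some i', None => c i' ord0
  | None, Some l' => (l' == ord0)%:R * e
  | None, None => 0 end.

Lemma controlled_mx_lift A c e i l :
  controlled_mx A c e (lift ord_max i) (lift ord_max l) =
  A i l - ((i == ord0) && (l == ord0))%:R * e.
Proof. by rewrite mxE !liftK. Qed.

Lemma controlled_mx_lift_max A c e i :
  controlled_mx A c e (lift ord_max i) ord_max = c i ord0.
Proof. by rewrite mxE liftK unlift_none. Qed.

Lemma controlled_mx_max_lift A c e l :
  controlled_mx A c e ord_max (lift ord_max l) = (l == ord0)%:R * e.
Proof. by rewrite mxE liftK unlift_none. Qed.

Lemma controlled_mx_max_max A c e : controlled_mx A c e ord_max ord_max = 0.
Proof. by rewrite mxE unlift_none. Qed.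

Lemma det_controlled_minor A c e :
  \det (row' ord_max (col' ord0 (0%:M - controlled_mx A c e))) =
  (-1) ^+ N.+1 * (\adj (- A) *m c) 0 0.
Proof.
set H := row' _ _.
have lift0_max : lift ord0 (@ord_max N) = ord_max by apply: val_inj.
have lift_comm (j : 'I_N) :
    lift ord0 (lift ord_max j) = lift ord_max (lift ord0 j) :> 'I_N.+2.
  by apply: val_inj; rewrite /= /bump /= add1n ltnS leqNgt ltn_ord.
have H_last i : H i ord_max = - c i ord0.
  by rewrite !mxE lift0_max liftK unlift_none mul0rn sub0r.
have H_minor : col' ord_max H = col' ord0 (- A).
  apply/matrixP => i j; rewrite !mxE lift_comm !liftK mul0rn sub0r.
  by rewrite [lift _ _ == _]eq_sym (negbTE (neq_lift _ _)) andbF mul0r subr0.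
rewrite (expand_det_col H (ord_max : 'I_N.+1)) mxE mulr_sumr; apply: eq_bigr => i _.
by rewrite H_last /cofactor H_minor mxE /cofactor /= addn0 exprD exprS; ring.
Qed.

End ControlledMatrix.

Lemma controlled_minor_sign (R : realDomainType) N (A : 'M[R]_N.+1) c e :
  (if odd N.+1 then 0 < \det (row' ord_max (col' ord0 (0%:M - controlled_mx A c e)))
   else \det (row' ord_max (col' ord0 (0%:M - controlled_mx A c e))) < 0) ->
  (\adj (- A) *m c) 0 0 < 0.
Proof.
rewrite det_controlled_minor -signr_odd.
by case: (odd N.+1); rewrite /= ?expr0 ?expr1 ?mul1r ?mulN1r ?oppr_gt0.
Qed.

Lemma map_controlled_mx (R S : comNzRingType) (f : {rmorphism R -> S}) N
    (A : 'M[R]_N.+1) c e :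
  map_mx f (controlled_mx A c e) = controlled_mx (map_mx f A) (map_mx f c) (f e).
Proof.
apply/matrixP => i j; rewrite !mxE.
by case: unlift => [i'|]; case: unlift => [j'|];
  rewrite ?mxE ?rmorphB ?rmorphM ?rmorph_nat ?rmorph0.
Qed.

Section CharPolyEval.
Variables (R : comNzRingType) (n : nat).
Implicit Types (A : 'M[R]_n) (x : R).

Lemma eval_char_poly_mx A x : map_mx (horner_eval x) (char_poly_mx A) = x%:M - A.
Proof.
apply/matrixP => i j; rewrite !mxE /horner_eval.
by rewrite hornerD hornerN hornerMn hornerX hornerC.
Qed.

Lemma horner_char_poly A x : (char_poly A).[x] = \det (x%:M - A).
Proof. by rewrite -eval_char_poly_mx det_map_mx. Qed.

Lemma horner_adj_char_poly_mx A x i j :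
  (\adj (char_poly_mx A) i j).[x] = \adj (x%:M - A) i j.
Proof. by rewrite -eval_char_poly_mx -map_mx_adj [RHS]mxE. Qed.

End CharPolyEval.

Definition coupling_poly (R : comNzRingType) N (A : 'M[R]_N.+1) (c : 'cV[R]_N.+1)
    : {poly R} :=
  (\adj (char_poly_mx A) *m map_mx polyC c) 0 0 - 'X * \adj (char_poly_mx A) 0 0.

Lemma horner_coupling_poly (R : comNzRingType) N (A : 'M[R]_N.+1) c x :
  (coupling_poly A c).[x] = (\adj (x%:M - A) *m c) 0 0 - x * \adj (x%:M - A) 0 0.
Proof.
rewrite /coupling_poly ![(_ *m _) _ _]mxE hornerD hornerN hornerM hornerX horner_sum.
rewrite horner_adj_char_poly_mx; congr (_ - _); apply: eq_bigr => j _.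
by rewrite hornerM horner_adj_char_poly_mx [map_mx _ _ _ _]mxE hornerC.
Qed.

Section ControlledEigenvalues.
Variables (F : fieldType) (N : nat) (A : 'M[F]_N.+1) (c : 'cV[F]_N.+1) (e : F).

Lemma controlled_eigenvector (v : 'rV[F]_N.+2) lam :
  v *m controlled_mx A c e = lam *: v ->
  col' ord_max v *m (lam%:M - A) =
    (e * (v 0 ord_max - v 0 (lift ord_max ord0))) *: delta_mx 0 ord0 /\
  (col' ord_max v *m c) 0 0 = lam * v 0 ord_max.
Proof.
move=> /rowP eig_v; split; last first.
  move: (eig_v ord_max).
  rewrite !mxE (bigD1_ord ord_max) //= controlled_mx_max_max mulr0 add0r => <-.
  by apply: eq_bigr => i _; rewrite mxE controlled_mx_lift_max.
apply/rowP => l; move: (eig_v (lift ord_max l)).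
rewrite !mxE (bigD1_ord ord_max) //= controlled_mx_max_lift.
under eq_bigr do rewrite controlled_mx_lift mulrBr.
have sum_e : \sum_i v 0 (lift ord_max i) * (((i == ord0) && (l == ord0))%:R * e)
    = v 0 (lift ord_max ord0) * ((l == ord0)%:R * e).
  rewrite (bigD1 ord0) //= big1 ?addr0 // => i /negbTE ->.
  by rewrite mul0r mulr0.
have sum_lam : \sum_j col' ord_max v 0 j * (lam%:M - A) j l
    = lam * v 0 (lift ord_max l) - \sum_j v 0 (lift ord_max j) * A j l.
  under eq_bigr do rewrite !mxE mulrBr.
  rewrite sumrB (bigD1 l) //= big1 ?addr0 ?eqxx ?mulr1 => [|j /negbTE ->].
    by rewrite mulr1n mulrC.
  by rewrite mulr0.
rewrite sumrB sum_e sum_lam => <-; case: (l == ord0) => /=; ring.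
Qed.

Lemma controlled_eigenvalue_eq lam :
  eigenvalue (controlled_mx A c e) lam -> (char_poly A).[lam] != 0 ->
  lam * (char_poly A).[lam] = e * (coupling_poly A c).[lam].
Proof.
rewrite horner_char_poly horner_coupling_poly.
move=> /eigenvalueP [v /controlled_eigenvector [Eu Ec] v_neq0] detB_neq0.
set B := lam%:M - A in Eu detB_neq0 *; set u := col' ord_max v in Eu Ec.
have u0E : v 0 (lift ord_max ord0) = u 0 ord0 by rewrite mxE.
rewrite u0E in Eu; set s := v 0 ord_max in Eu Ec v_neq0 *.
set t := e * (s - u 0 ord0) in Eu.
have adjE j : \det B * u 0 j = t * \adj B ord0 j.
  have := congr1 (mulmx^~ (\adj B)) Eu.
  rewrite -mulmxA mul_mx_adj mul_mx_scalar -scalemxAl -rowE => /rowP /(_ j).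
  by rewrite !mxE.
have s_neq_u0 : s - u 0 ord0 != 0.
  apply: contra v_neq0 => /eqP s_u0; apply/eqP.
  have u_eq0 j : u 0 j = 0.
    by apply: (mulfI detB_neq0); rewrite adjE /t s_u0 !mulr0 mul0r.
  apply/rowP => k; rewrite mxE; case: (unliftP ord_max k) => [j ->|->].
    by have := u_eq0 j; rewrite mxE.
  by move: s_u0; rewrite u_eq0 subr0.
apply: (mulIf s_neq_u0).
have detB_s : \det B * (lam * s) = t * (\adj B *m c) 0 0.
  rewrite -Ec !mxE !mulr_sumr; apply: eq_bigr => j _.
  by rewrite mulrA adjE mulrA.
have detB_u0 : \det B * (lam * u 0 ord0) = t * (lam * \adj B 0 0).
  by rewrite mulrCA adjE mulrCA.
transitivity (\det B * (lam * s) - \det B * (lam * u 0 ord0)); first ring.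
by rewrite detB_s detB_u0 /t; ring.
Qed.

End ControlledEigenvalues.

(** * Estimates in the complex plane *)

Import Normc.

Section ComplexModulus.
Variable R : rcfType.
Implicit Types (z w : R[i]) (x : R).

Lemma normc_ge0 z : 0 <= normc z.
Proof. by case: z => a b; rewrite /= sqrtr_ge0. Qed.

Lemma normc_eq0 z : (normc z == 0) = (z == 0).
Proof. by apply/eqP/eqP => [/eq0_normc|->]; last exact: normc0. Qed.

Lemma normcX z k : normc (z ^+ k) = normc z ^+ k.
Proof. by elim: k => [|k IH]; rewrite ?normc1 // !exprS normcM IH. Qed.

Lemma normc_real x : normc x%:C = `|x|.
Proof. by rewrite /= expr0n /= addr0 sqrtr_sqr. Qed.

Lemma normc_ge_ReR z : `|complex.Re z| <= normc z.
Proof. by have := normc_ge_Re z; case: z => a b; rewrite lecR. Qed.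

Lemma normc_sum_le I (r : seq I) (F : I -> R[i]) :
  normc (\sum_(i <- r) F i) <= \sum_(i <- r) normc (F i).
Proof.
elim: r => [|a r IH]; first by rewrite !big_nil normc0.
by rewrite !big_cons; apply: le_trans (le_normcD _ _) _; rewrite lerD2l.
Qed.

Lemma normc_prod I (r : seq I) (F : I -> R[i]) :
  normc (\prod_(i <- r) F i) = \prod_(i <- r) normc (F i).
Proof. by elim: r => [|a r IH]; rewrite ?big_nil ?normc1 // !big_cons normcM IH. Qed.

Lemma ReB z w : complex.Re (z - w) = complex.Re z - complex.Re w.
Proof. by case: z; case: w. Qed.

Lemma ReM_real z x : complex.Re (z * x%:C) = complex.Re z * x.
Proof. by case: z => a b /=; rewrite mulr0 subr0. Qed.

Lemma Re_lt0E z : (Re z < 0) = (complex.Re z < 0).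
Proof. by rewrite -complexRe ltcR. Qed.

Lemma normc_horner_le (p : {poly R[i]}) z x :
  normc z <= x -> normc p.[z] <= \sum_(i < size p) normc p`_i * x ^+ i.
Proof.
move=> z_le; rewrite horner_coef; apply: le_trans; first exact: normc_sum_le.
apply: ler_sum => i _; rewrite normcM normcX ler_wpM2l ?normc_ge0 //.
by rewrite lerXn2r ?nnegrE ?normc_ge0 // (le_trans (normc_ge0 z)).
Qed.

Lemma normc_horner_sub0_le (p : {poly R[i]}) z :
  normc z <= 1 -> normc (p.[z] - p.[0]) <= normc z * \sum_(i < size p) normc p`_i.
Proof.
move=> z_le1; rewrite !horner_coef -sumrB mulr_sumr.
apply: le_trans; first exact: normc_sum_le.
apply: ler_sum => i _; rewrite -mulrBr normcM mulrC ler_wpM2r ?normc_ge0 //.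
case: (nat_of_ord i) => [|k]; first by rewrite subrr normc0 normc_ge0.
rewrite expr0n subr0 normcX exprS ler_piMr ?normc_ge0 //.
by rewrite exprn_ile1 ?normc_ge0.
Qed.

Lemma normc_eigenvalue_le n (M : 'M[R[i]]_n) lam :
  eigenvalue M lam -> normc lam <= \sum_i \sum_j normc (M i j).
Proof.
move=> /eigenvalueP [v eig_v v_neq0].
set S := \sum_j normc (v 0 j).
have S_gt0 : 0 < S.
  have [k vk_neq0] : exists k, v 0 k != 0.
    apply/existsP; apply: contraR v_neq0 => /existsPn v0; apply/eqP/rowP => k.
    by move/negPn/eqP: (v0 k); rewrite mxE.
  have vk_gt0 : 0 < normc (v 0 k) by rewrite lt0r normc_eq0 vk_neq0 normc_ge0.
  rewrite /S (bigD1 k) //= ltr_pwDl // sumr_ge0 // => j _; exact: normc_ge0.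
rewrite -(ler_pM2r S_gt0).
apply: (@le_trans _ _ (\sum_j \sum_i normc (v 0 i) * normc (M i j))).
  rewrite /S mulr_sumr; apply: ler_sum => j _; rewrite -normcM.
  have -> : lam * v 0 j = (v *m M) 0 j by rewrite eig_v mxE.
  rewrite mxE; apply: le_trans; first exact: normc_sum_le.
  by apply: ler_sum => i _; rewrite normcM.
rewrite exchange_big mulrC /S mulr_suml; apply: ler_sum => i _ /=.
rewrite -mulr_sumr ler_wpM2l ?normc_ge0 // [leRHS](bigD1 i) //= lerDl.
by apply: sumr_ge0 => k _; apply: sumr_ge0 => j _; exact: normc_ge0.
Qed.

Lemma char_poly_horner0_gt0 n (A : 'M[R]_n) :
  (forall lam : R[i], eigenvalue (map_mx (real_complex R) A) lam -> Re lam < 0) ->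
  0 < (char_poly A).[0].
Proof.
move=> A_stable.
have no_root : {in `[0, +oo[, forall t : R, ~~ root (char_poly A) t}.
  move=> t; rewrite in_itv /= andbT => t_ge0; apply/negP => root_t.
  have : eigenvalue (map_mx (real_complex R) A) t%:C.
    by rewrite eigenvalue_root_char -map_char_poly rmorph_root.
  by move/A_stable; rewrite Re_lt0E /= ltNge t_ge0.
have := sgp_pinftyP no_root (_ : 0 \in `[0, +oo[); rewrite in_itv /= lexx => /(_ isT).
by rewrite /sgp_pinfty (monicP (char_poly_monic A)) sgr1 => /eqP; rewrite sgr_cp0.
Qed.

Lemma char_poly_rhp_lower_bound n (B : 'M[R[i]]_n) :
  (forall lam, eigenvalue B lam -> complex.Re lam < 0) ->
  exists2 d : R, 0 < d &
    forall lam, 0 <= complex.Re lam -> d <= normc (char_poly B).[lam].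
Proof.
move=> B_stable; have [rs char_B] := closed_field_poly_normal (char_poly B).
rewrite (monicP (char_poly_monic B)) scale1r in char_B.
have rs_lt0 z : z \in rs -> complex.Re z < 0.
  by move=> z_rs; apply: B_stable; rewrite eigenvalue_root_char char_B root_prod_XsubC.
exists (\prod_(z <- rs) - complex.Re z).
  by rewrite big_seq prodr_gt0 // => z /rs_lt0; rewrite oppr_gt0.
move=> lam Re_lam_ge0; rewrite char_B horner_prod normc_prod big_seq [leRHS]big_seq.
apply: ler_prod => z /rs_lt0 Re_z_lt0; rewrite hornerXsubC oppr_ge0 (ltW Re_z_lt0) /=.
by apply: le_trans (normc_ge_ReR _); rewrite ReB ger0_norm; lra.
Qed.

End ComplexModulus.

(** * Small perturbations of a stable characteristic equation *)

Section SmallRhpRoots.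
Variables (R : rcfType) (P S : {poly R[i]}) (p0 r0 d T : R).
Hypotheses (d_gt0 : 0 < d) (T_ge0 : 0 <= T).
Hypothesis P_rhp : forall lam, 0 <= complex.Re lam -> d <= normc P.[lam].
Hypotheses (P0 : P.[0] = p0%:C) (p0_ge0 : 0 <= p0).
Hypotheses (S0 : S.[0] = r0%:C) (r0_lt0 : r0 < 0).

Let coef_sum (p : {poly R[i]}) := \sum_(i < size p) normc p`_i.
Let K := (\sum_(i < size S) normc S`_i * T ^+ i) / d.
Let D := K ^+ 2 * coef_sum P + K * coef_sum S.

Let coef_sum_ge0 p : 0 <= coef_sum p.
Proof. by apply: sumr_ge0 => i _; exact: normc_ge0. Qed.

Let K_ge0 : 0 <= K.
Proof.
apply: divr_ge0; last exact: ltW.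
by apply: sumr_ge0 => i _; rewrite mulr_ge0 ?normc_ge0 ?exprn_ge0.
Qed.

Let D_ge0 : 0 <= D.
Proof.
by apply: addr_ge0; apply: mulr_ge0; rewrite ?exprn_ge0 ?K_ge0 ?coef_sum_ge0.
Qed.

Lemma rhp_root_normc_le e lam :
  0 <= e -> 0 <= complex.Re lam -> normc lam <= T ->
  lam * P.[lam] = e%:C * S.[lam] -> normc lam <= e * K.
Proof.
move=> e_ge0 Re_lam_ge0 lam_le root_lam.
have norm_eq : normc lam * normc P.[lam] = e * normc S.[lam].
  by rewrite -normcM root_lam normcM normc_real ger0_norm.
rewrite /K mulrA ler_pdivlMr //; apply: (@le_trans _ _ (normc lam * normc P.[lam])).
  by rewrite ler_wpM2l ?normc_ge0 ?P_rhp.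
by rewrite norm_eq ler_wpM2l // normc_horner_le.
Qed.

Lemma rhp_root_first_order_le e lam :
  0 <= e -> e * K <= 1 -> 0 <= complex.Re lam -> normc lam <= T ->
  lam * P.[lam] = e%:C * S.[lam] ->
  normc (lam * P.[0] - e%:C * S.[0]) <= e ^+ 2 * D.
Proof.
move=> e_ge0 eK_le1 Re_lam_ge0 lam_le root_lam.
have lam_eK := rhp_root_normc_le e_ge0 Re_lam_ge0 lam_le root_lam.
have lam_le1 : normc lam <= 1 := le_trans lam_eK eK_le1.
have -> : lam * P.[0] - e%:C * S.[0] =
    - (lam * (P.[lam] - P.[0])) + e%:C * (S.[lam] - S.[0]).
  by rewrite !mulrBr root_lam; ring.
apply: le_trans; first exact: le_normcD.
rewrite normcN !normcM normc_real ger0_norm //.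
have lam_ge0 := normc_ge0 lam.
rewrite (_ : e ^+ 2 * D = e * K * (e * K * coef_sum P) + e * (e * K * coef_sum S)).
  apply: lerD.
    apply: ler_pM; rewrite ?normc_ge0 //.
    exact: le_trans (normc_horner_sub0_le P lam_le1) (ler_wpM2r (coef_sum_ge0 P) lam_eK).
  rewrite ler_wpM2l //.
  exact: le_trans (normc_horner_sub0_le S lam_le1) (ler_wpM2r (coef_sum_ge0 S) lam_eK).
by rewrite /D; ring.
Qed.

Lemma no_small_rhp_root :
  exists2 e0 : R, 0 < e0 <= 1 & forall e lam, 0 < e < e0 ->
    0 <= complex.Re lam -> normc lam <= T -> lam * P.[lam] != e%:C * S.[lam].
Proof.
have Dr_ge0 : 0 <= D / - r0 by rewrite divr_ge0 ?D_ge0 // oppr_ge0 ltW.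
set Q := 1 + K + D / - r0.
have Q_ge1 : 1 <= Q by rewrite /Q -addrA lerDl addr_ge0 ?K_ge0.
have Q_gt0 : 0 < Q := lt_le_trans ltr01 Q_ge1.
exists Q^-1; first by rewrite invr_gt0 Q_gt0 invf_le1.
move=> e lam /andP[e_gt0 e_lt] Re_lam_ge0 lam_le; apply/eqP => root_lam.
have eQ_lt1 : e * Q < 1 by rewrite -ltr_pdivlMr // div1r.
have eK_ge0 := mulr_ge0 (ltW e_gt0) K_ge0.
have eDr_ge0 := mulr_ge0 (ltW e_gt0) Dr_ge0.
have eK_le1 : e * K <= 1 by move: eQ_lt1; rewrite /Q; lra.
have eD_lt : e * D < - r0.
  have : e * (D / - r0) < 1 by move: eQ_lt1; rewrite /Q; lra.
  by rewrite mulrA ltr_pdivrMr ?oppr_gt0 // mul1r.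
have first_order := rhp_root_first_order_le (ltW e_gt0) eK_le1 Re_lam_ge0 lam_le root_lam.
have Re_ge : - (e * r0) <= complex.Re (lam * P.[0] - e%:C * S.[0]).
  by rewrite P0 S0 -rmorphM ReB ReM_real /= lerBrDr addNr mulr_ge0.
have := le_trans Re_ge (le_trans (ler_norm _) (le_trans (normc_ge_ReR _) first_order)).
have : e * (e * D) < e * - r0 by rewrite ltr_pM2l.
by rewrite expr2; lra.
Qed.

End SmallRhpRoots.

Lemma controlled_mx_eigenvalue_le (R : rcfType) N (A : 'M[R]_N.+1) c e lam :
  0 <= e <= 1 -> eigenvalue (map_mx (real_complex R) (controlled_mx A c e)) lam ->
  normc lam <= \sum_i \sum_j (`|controlled_mx A c 0 i j| + 1).
Proof.
move=> /andP[e_ge0 e_le1] /normc_eigenvalue_le /le_trans; apply.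
apply: ler_sum => i _; apply: ler_sum => j _; rewrite mxE normc_real !mxE.
case: unlift => [i'|]; case: unlift => [j'|]; rewrite ?mulr0 ?subr0 ?normr0 ?lerDl //.
- case: (_ && _); rewrite ?mul1r ?mul0r ?subr0 ?lerDl //.
  by apply: le_trans (ler_normB _ _) _; rewrite lerD2l ger0_norm.
- by case: (_ == _); rewrite ?mul1r ?mul0r ?normr0 add0r // ger0_norm.
Qed.

Lemma controlled_mx_stable (R : rcfType) N (A : 'M[R]_N.+1) (c : 'cV[R]_N.+1) :
  (forall lam : R[i], eigenvalue (map_mx (real_complex R) A) lam -> Re lam < 0) ->
  (\adj (- A) *m c) 0 0 < 0 ->
  exists2 e0 : R, 0 < e0 & forall e, 0 < e < e0 ->
    forall lam : R[i],
      eigenvalue (map_mx (real_complex R) (controlled_mx A c e)) lam -> Re lam < 0.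
Proof.
move=> A_stable r0_lt0.
set toC := real_complex R; set Ac := map_mx toC A; set cc := map_mx toC c.
have [d d_gt0 P_rhp] : exists2 d : R, 0 < d &
    forall lam, 0 <= complex.Re lam -> d <= normc (char_poly Ac).[lam].
  by apply: char_poly_rhp_lower_bound => lam /A_stable; rewrite Re_lt0E.
have P0 : (char_poly Ac).[0] = ((char_poly A).[0])%:C.
  by rewrite /Ac -map_char_poly -(rmorph0 toC) horner_map.
have S0 : (coupling_poly Ac cc).[0] = ((\adj (- A) *m c) 0 0)%:C.
  rewrite horner_coupling_poly mul0r subr0 (_ : 0%:M - Ac = map_mx toC (- A)).
    by rewrite -map_mx_adj -map_mxM mxE.
  by rewrite map_mxN raddf0 sub0r.
set T := \sum_i \sum_j (`|controlled_mx A c 0 i j| + 1).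
have T_ge0 : 0 <= T.
  by rewrite sumr_ge0 // => i _; rewrite sumr_ge0 // => j _; rewrite addr_ge0.
have [e0 /andP[e0_gt0 e0_le1] no_root] := no_small_rhp_root d_gt0 T_ge0 P_rhp P0
  (ltW (char_poly_horner0_gt0 A_stable)) S0 r0_lt0.
exists e0 => // e e_range lam eig_lam; have /andP[e_gt0 e_lt] := e_range.
rewrite Re_lt0E ltNge; apply/negP => Re_lam_ge0.
have lam_le : normc lam <= T.
  apply: controlled_mx_eigenvalue_le eig_lam.
  by rewrite (ltW e_gt0) (le_trans (ltW e_lt)).
rewrite map_controlled_mx -/Ac -/cc in eig_lam.
have P_lam_neq0 : (char_poly Ac).[lam] != 0.
  by rewrite -normc_eq0 gt_eqF // (lt_le_trans d_gt0 (P_rhp _ Re_lam_ge0)).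
have := controlled_eigenvalue_eq eig_lam P_lam_neq0.
by apply/eqP; apply: no_root.
Qed.

(** * Directional derivatives along lines *)

Section DirectionalDerivatives.
Variable R : realType.

Lemma derive_line_eq (V V' W : normedModType R) (F : V -> W) (G : V' -> W) a b v w :
  (forall h : R, F (h *: v + a) = G (h *: w + b)) ->
  'D_v F a = 'D_w G b /\ (derivable G b w -> derivable F a v).
Proof.
move=> FG; have Fa : F a = G b by have := FG 0; rewrite !scale0r !add0r.
have quotE : (fun h : R => h^-1 *: ((F \o shift a) (h *: v) - F a)) =
              (fun h : R => h^-1 *: ((G \o shift b) (h *: w) - G b)).
  by apply: funext => h /=; rewrite /shift /= FG Fa.
by rewrite /derive /derivable quotE.
Qed.

Lemma derive_quadratic_line (V : normedModType R) (F : V -> R) a v (c1 c2 : R) :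
  (forall h : R, F (h *: v + a) = F a + h * c1 + h ^+ 2 * c2) ->
  derivable F a v /\ 'D_v F a = c1.
Proof.
move=> F_line.
have lim_c1 : (fun h : R => c1 + h * c2) @ 0^' --> c1.
  have cont : {for 0, continuous (fun h : R => c1 + h * c2)}.
    by apply: cvgD; [exact: cvg_cst | apply: cvgM; [exact: cvg_id | exact: cvg_cst]].
  by have := (continuous_withinNx _ _).1 cont; rewrite /= mul0r addr0.
have quot : (fun h : R => h^-1 *: ((F \o shift a) (h *: v) - F a)) @ 0^' --> c1.
  apply: cvg_trans lim_c1; apply: near_eq_cvg; near=> h.
  have h_neq0 : h != 0 by near: h; exact: nbhs_dnbhs_neq.
  by rewrite /= /shift F_line -[_ *: _]/(_ * _); field.
by split; [exact: (cvgP _ quot) | exact: cvg_lim quot].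
Unshelve. all: by end_near.
Qed.

Lemma derive_row_coord p (V : normedModType R) (f : V -> 'rV[R]_p) a v k :
  derivable f a v ->
  derivable (fun x => f x 0 k) a v /\ 'D_v (fun x => f x 0 k) a = ('D_v f a) 0 k.
Proof.
move=> df; split; first by move/derivable_mxP: df; apply.
by rewrite derive_mx // mxE.
Qed.

End DirectionalDerivatives.

(** * The Jacobian of the controlled system *)

Section ControlledJacobian.
Variables (R : realType) (n m : nat) (U : 'M[R]_(m.+1, n.+1)).
Variable xs : 'rV[R]_(n.+1 + m.+1).
Implicit Types (d w : 'rV[R]_n.+2) (h : R).

Definition dliftxz d : 'rV[R]_(n.+1 + m.+1) :=
  row_mx (yof d) (- (yof d *m U^T) - zof d *: u1 U).

Lemma yof_line d w h : yof (h *: d + w) = h *: yof d + yof w.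
Proof. by apply/rowP => j; rewrite !mxE. Qed.

Lemma zof_line d w h : zof (h *: d + w) = h * zof d + zof w.
Proof. by rewrite /zof !mxE. Qed.

Lemma liftxz_line Mb d w h :
  liftxz U Mb (h *: d + w) = h *: dliftxz d + liftxz U Mb w.
Proof.
rewrite /liftxz /dliftxz yof_line zof_line scale_row_mx add_row_mx; congr row_mx.
by rewrite mulmxDl -scalemxAl; apply/rowP => j; rewrite !mxE; ring.
Qed.

Lemma widen_ord_max (i : 'I_n.+1) : widen_ord (leqnSn n.+1) i = lift ord_max i.
Proof. by apply: val_inj; rewrite [RHS]lift_max. Qed.

Lemma yof_wstar zs : yof (wstar xs zs) = lsubmx xs.
Proof. by apply/rowP => j; rewrite !mxE widen_ord_max liftK. Qed.

Lemma zof_wstar zs : zof (wstar xs zs) = zs.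
Proof. by rewrite /zof mxE unlift_none. Qed.

Lemma liftxz_wstar zs : liftxz U (consMbar U xs zs) (wstar xs zs) = xs.
Proof.
rewrite /liftxz yof_wstar zof_wstar /consMbar /consM -[RHS]hsubmxK; congr row_mx.
by apply/rowP => j; rewrite !mxE; ring.
Qed.

Lemma yof_delta_lift l : yof (delta_mx 0 (lift ord_max l) : 'rV[R]_n.+2) = delta_mx 0 l.
Proof. by apply/rowP => j; rewrite !mxE widen_ord_max (inj_eq lift_inj). Qed.

Lemma zof_delta_lift l : zof (delta_mx 0 (lift ord_max l) : 'rV[R]_n.+2) = 0.
Proof. by rewrite /zof mxE (negbTE (neq_lift _ _)) andbF. Qed.

Lemma yof_delta_max : yof (delta_mx 0 ord_max : 'rV[R]_n.+2) = 0.
Proof.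
by apply/rowP => j; rewrite !mxE widen_ord_max eq_sym (negbTE (neq_lift _ _)) andbF.
Qed.

Lemma dliftxz_lift l :
  dliftxz (delta_mx 0 (lift ord_max l)) = row_mx (delta_mx 0 l) (- (delta_mx 0 l *m U^T)).
Proof. by rewrite /dliftxz yof_delta_lift zof_delta_lift scale0r subr0. Qed.

Lemma liftx_consM : liftx U (consM U xs) (lsubmx xs) = xs.
Proof. by rewrite /liftx /consM addrC addKr hsubmxK. Qed.

Lemma liftx_line M (y : 'rV[R]_n.+1) l h :
  liftx U M (h *: delta_mx 0 l + y) =
  h *: dliftxz (delta_mx 0 (lift ord_max l)) + liftx U M y.
Proof.
rewrite dliftxz_lift /liftx scale_row_mx add_row_mx; congr row_mx.
by rewrite mulmxDl -scalemxAl scalerN opprD addrCA.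
Qed.

Variable f : 'rV[R]_(n.+1 + m.+1) -> 'rV[R]_(n.+1 + m.+1).
Hypothesis df : differentiable f xs.

Lemma Jred_entry i l :
  Jred f U xs i l = ('D_(dliftxz (delta_mx 0 (lift ord_max l))) f xs) 0 (lshift m.+1 i).
Proof.
rewrite mxE /dpart /gfun.
set v := dliftxz _.
have [-> _] := @derive_line_eq R _ _ _
  (fun y => f (liftx U (consM U xs) y) 0 (lshift m.+1 i)) (fun x => f x 0 (lshift m.+1 i))
  (lsubmx xs) xs (delta_mx 0 l) v (fun h => ltac:(by rewrite /= liftx_line liftx_consM)).
by have [_ ->] := derive_row_coord (lshift m.+1 i) (@diff_derivable _ _ _ _ _ v df).
Qed.

Lemma derive_network_part zs d k :
  derivable (fun w => f (liftxz U (consMbar U xs zs) w) 0 k) (wstar xs zs) d /\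
  'D_d (fun w => f (liftxz U (consMbar U xs zs) w) 0 k) (wstar xs zs) =
    ('D_(dliftxz d) f xs) 0 k.
Proof.
have [-> derivable_line] := @derive_line_eq R _ _ _
  (fun w => f (liftxz U (consMbar U xs zs) w) 0 k) (fun x => f x 0 k)
  (wstar xs zs) xs d (dliftxz d) (fun h => ltac:(by rewrite /= liftxz_line liftxz_wstar)).
have [dfk ->] := derive_row_coord k (@diff_derivable _ _ _ _ _ (dliftxz d) df).
by split => //; apply: derivable_line.
Qed.

Variables theta mu : R.
Hypothesis x1_eq : theta * xs 0 (lshift m.+1 ord0) = mu.

Lemma derive_controller_part zs d :
  derivable (fun w : 'rV[R]_n.+2 => zof w * (theta * yof w 0 ord0 - mu))
    (wstar xs zs) d /\
  'D_d (fun w : 'rV[R]_n.+2 => zof w * (theta * yof w 0 ord0 - mu)) (wstar xs zs) =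
    zs * theta * yof d 0 ord0.
Proof.
apply: (@derive_quadratic_line _ _ _ _ _ _ (zof d * theta * yof d 0 ord0)) => h.
rewrite zof_line yof_line !mxE zof_wstar widen_ord_max liftK -x1_eq; ring.
Qed.

Lemma derive_hfun_lift zs i d :
  'D_d (hfun f U theta mu (consMbar U xs zs) (lift ord_max i)) (wstar xs zs) =
  ('D_(dliftxz d) f xs) 0 (lshift m.+1 i) - (i == ord0)%:R * (zs * theta * yof d 0 ord0).
Proof.
have [dF <-] := derive_network_part zs d (lshift m.+1 i).
have [dq <-] := derive_controller_part zs d.
set F := fun w => f _ 0 _ in dF *; set q := fun w => zof w * _ in dq *.
have -> : hfun f U theta mu (consMbar U xs zs) (lift ord_max i) =
    F - (i == ord0)%:R \*o q.
  by apply: funext => w; rewrite /hfun liftK.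
rewrite deriveB ?deriveMl //; apply: derivableM => //; exact: derivable_cst.
Qed.

Lemma derive_hfun_max zs d :
  'D_d (hfun f U theta mu (consMbar U xs zs) ord_max) (wstar xs zs) =
  zs * theta * yof d 0 ord0.
Proof.
have [_ <-] := derive_controller_part zs d.
by congr derive; apply: funext => w; rewrite /hfun unlift_none.
Qed.

Lemma Jbar_controlled_mx zs :
  Jbar f U theta mu xs zs =
  controlled_mx (Jred f U xs)
    (\col_i ('D_(dliftxz (delta_mx 0 ord_max)) f xs) 0 (lshift m.+1 i)) (zs * theta).
Proof.
apply/matrixP => i l; rewrite /Jbar /controlled_mx !mxE /dpart.
case: (unliftP ord_max i) => [i' ->|->]; case: (unliftP ord_max l) => [l' ->|->];
  rewrite ?liftK ?unlift_none ?derive_hfun_lift ?derive_hfun_max.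
- rewrite Jred_entry yof_delta_lift !mxE eqxx /= [ord0 == _]eq_sym.
  by case: (i' == ord0); case: (l' == ord0); rewrite /=; ring.
- by rewrite yof_delta_max !mxE mulr0 mulr0 subr0.
- by rewrite yof_delta_lift !mxE eqxx /= [ord0 == _]eq_sym; ring.
- by rewrite yof_delta_max mxE mulr0.
Qed.

End ControlledJacobian.

Theorem mainTheorem3 (R : realType) (n m : nat)
    (f : 'rV[R]_(n.+1 + m.+1) -> 'rV[R]_(n.+1 + m.+1))
    (U : 'M[R]_(m.+1, n.+1)) (xs : 'rV[R]_(n.+1 + m.+1)) :
  (* f is the (smooth enough) vector field: differentiable at xstar *)
  differentiable f xs ->
  (* xstar is a positive steady state *)
  (forall i, 0 < xs 0 i) ->
  f xs = 0 ->
  (* (1) conservation relations [U | I] x = M, u^i nonnegative, u^1_1 <> 0 *)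
  (forall x : 'rV[R]_(n.+1 + m.+1), (forall i, 0 < x 0 i) ->
     lsubmx (f x) *m U^T + rsubmx (f x) = 0) ->
  (forall j i, 0 <= U j i) ->
  U 0 0 != 0 ->
  (* (2) J(xstar) is Hurwitz *)
  all_eig_neg_re (Jred f U xs) ->
  (* conclusion *)
  forall zs : R, 0 < zs ->
  exists theta0 : R, 0 < theta0 /\
    forall theta mu : R, 0 < theta -> theta < theta0 -> 0 < mu ->
      xs 0 (lshift m.+1 ord0) = mu / theta ->
      (* (3) sign condition on H_2(0) *)
      (if odd n.+1 then 0 < H2at0 f U theta mu xs zs
       else H2at0 f U theta mu xs zs < 0) ->
      all_eig_neg_re (Jbar f U theta mu xs zs).
Proof.
move=> df _ _ _ _ _ J_stable zs zs_gt0.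
set c := \col_i ('D_(dliftxz U (delta_mx 0 ord_max)) f xs) 0 (lshift m.+1 i).
have Jbar_eq theta mu : 0 < theta -> xs 0 (lshift m.+1 ord0) = mu / theta ->
    Jbar f U theta mu xs zs = controlled_mx (Jred f U xs) c (zs * theta).
  move=> theta_gt0 x1_eq; apply: Jbar_controlled_mx => //.
  by rewrite x1_eq mulrCA divff ?mulr1 ?gt_eqF.
have [r0_lt0|r0_ge0] := ltP ((\adj (- Jred f U xs) *m c) 0 0) 0; last first.
  exists 1; split => // theta mu theta_gt0 _ _ x1_eq.
  by rewrite /H2at0 Jbar_eq // => /controlled_minor_sign; rewrite ltNge r0_ge0.
have [e0 e0_gt0 stable] := controlled_mx_stable J_stable r0_lt0.
exists (e0 / zs); split => [|theta mu theta_gt0 theta_lt _ x1_eq _].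
  exact: divr_gt0.
rewrite /all_eig_neg_re Jbar_eq //; apply: stable.
by rewrite mulr_gt0 //= mulrC -ltr_pdivlMr.
Qed.
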